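(* Let $0<\epsilon<1$ and let $\mathcal C$ be a family of Boolean functions such that every $f:\{0,1\}^n\to\{0,1\}$ in $\mathcal C$ satisfies $\deg_\pm(f)\ge cn^\alpha$, for some constants $c>0$ and $\alpha>0$. Then for every $f\in\mathcal C$, $D(f)\le O(M_\epsilon(f)^{1/\alpha})$.
   Context: $\mathsf N_\epsilon(f)$ is the minimum degree of a real polynomial $p$ with $|p(x)|\le\epsilon$ whenever $f(x)=0$ and $|p(x)|\ge1$ whenever $f(x)=1$; $\overline f=1-f$; $M_\epsilon(f)=\max\{\mathsf N_\epsilon(f),\mathsf N_\epsilon(\overline f)\}$. The sign degree $\deg_\pm(f)$ is the minimum degree of a real polynomial $p$ such that $p(x)<0$ iff $f(x)=1$ for all $x\in\{0,1\}^n$. $D(f)$ is deterministic decision tree complexity. The constant in $O(\cdot)$ depends on $c,\alpha$. *)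

From HB Require Import structures.
From mathcomp Require Import all_boot all_order all_algebra.
From mathcomp Require Import all_classical all_reals all_analysis.
From mathcomp Require mpoly.
Set Implicit Arguments. Unset Strict Implicit. Unset Printing Implicit Defensive.
Import Order.TTheory GRing.Theory Num.Theory.
Local Open Scope ring_scope.

Definition cube (n : nat) := {ffun 'I_n -> bool}.
Definition boolfun (n : nat) := cube n -> bool.

(* Least natural number satisfying a (Prop) predicate; 0 if none exists. *)
Definition minnat (P : nat -> Prop) : nat :=
  match pselect (exists k, P k) with
  | left h => @ex_minn (fun k => `[< P k >]) (let: ex_intro k hk := h in ex_intro _ k (asboolT hk))
  | right _ => 0%N
  end.

Section Defs.
Variable R : realType.

Definition rpoly (n : nat) := mpoly.mpoly n R.
Definition peval (n : nat) (p : rpoly n) (x : cube n) : R :=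
  mpoly.meval (fun i => (x i : nat)%:R) p.
(* total degree <= d: every monomial in the support of p has total degree <= d
   (this is what  msize p <= d.+1  unfolds to; the zero polynomial has degree <= 0) *)
Definition deg_le (n : nat) (p : rpoly n) (d : nat) : Prop :=
  all (fun m => (mpoly.mdeg m <= d)%N) (mpoly.msupp p).

Definition fcompl (n : nat) (f : boolfun n) : boolfun n := fun x => ~~ f x.

Definition approx_poly (n : nat) (eps : R) (f : boolfun n) (p : rpoly n) : Prop :=
  forall x, (f x = false -> `|peval p x| <= eps) /\ (f x = true -> 1 <= `|peval p x|).
Definition Neps (n : nat) (eps : R) (f : boolfun n) : nat :=
  minnat (fun d => exists p : rpoly n, deg_le p d /\ approx_poly eps f p).
Definition Meps (n : nat) (eps : R) (f : boolfun n) : nat :=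
  maxn (Neps eps f) (Neps eps (fcompl f)).

Definition sign_rep (n : nat) (f : boolfun n) (p : rpoly n) : Prop :=
  forall x, (peval p x < 0) <-> f x = true.
Definition sign_deg (n : nat) (f : boolfun n) : nat :=
  minnat (fun d => exists p : rpoly n, deg_le p d /\ sign_rep f p).
End Defs.

Inductive dtree (n : nat) : Type :=
| Leaf of bool
| Query of 'I_n & dtree n & dtree n.  (* Query i t0 t1: go to t1 if x_i = 1 *)
Arguments Leaf {n}.

Fixpoint dt_eval (n : nat) (t : dtree n) (x : cube n) : bool :=
  match t with
  | Leaf b => b
  | Query i t0 t1 => if x i then dt_eval t1 x else dt_eval t0 x
  end.

Fixpoint dt_depth (n : nat) (t : dtree n) : nat :=
  match t with
  | Leaf _ => 0%N
  | Query _ t0 t1 => (maxn (dt_depth t0) (dt_depth t1)).+1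
  end.

Definition Ddt (n : nat) (f : boolfun n) : nat :=
  minnat (fun d => exists t : dtree n, dt_depth t = d /\ forall x, dt_eval t x = f x).

(* D(f) <= n always, by querying every variable.  On the other side, if q is an
   eps-approximation of the complement of f, then q^2 - (1 + eps^2)/2 is negative
   exactly where f = 1 (there q^2 <= eps^2, elsewhere q^2 >= 1), so
   deg_pm(f) <= 2 N_eps(1 - f) <= 2 M_eps(f).  Hence c n^alpha <= 2 M_eps(f), i.e.
   D(f) <= n <= (2/c)^(1/alpha) M_eps(f)^(1/alpha). *)
From HB Require Import structures.
From mathcomp Require Import all_boot all_order all_algebra.
From mathcomp Require Import mpoly.
From mathcomp Require Import boolp reals exp.
From mathcomp Require Import lra.
Import Order.TTheory GRing.Theory Num.Theory.
Local Open Scope ring_scope.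
Set Implicit Arguments.

Lemma minnatP (P : nat -> Prop) : (exists k, P k) -> P (minnat P).
Proof.
move=> ex_k; rewrite /minnat; case: pselect => [ex_P|//].
by case: ex_minnP => m /asboolP Pm _.
Qed.

Lemma minnat_le (P : nat -> Prop) k : P k -> (minnat P <= k)%N.
Proof.
move=> Pk; rewrite /minnat; case: pselect => [ex_P|//].
by case: ex_minnP => m _; apply; apply/asboolP.
Qed.

Section Polynomials.
Variables (R : realType) (n : nat).
Implicit Types (p q : rpoly R n) (f : boolfun n) (x : cube n).

Lemma deg_le_exists p : exists d, deg_le p d.
Proof.
exists (\max_(m <- msupp p) mdeg m)%N.
by apply/allP => m m_supp; apply: leq_bigmax_seq.
Qed.

Lemma deg_leM p q d e : deg_le p d -> deg_le q e -> deg_le (p * q) (d + e).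
Proof.
move=> /allP p_deg /allP q_deg; apply/allP.
move=> m /msuppM_le /allpairsP[[m1 m2] /= [m1p m2q ->]].
by rewrite mdegD leq_add ?p_deg ?q_deg.
Qed.

Lemma deg_leBC p (a : R) d : deg_le p d -> deg_le (p - a%:MP) d.
Proof.
move=> /allP p_deg; apply/allP => m /msuppB_le; rewrite mem_cat => /orP[/p_deg //|].
by rewrite msuppC; case: eqP => // _; rewrite inE => /eqP ->; rewrite mdeg0.
Qed.

Definition cube_indicator (a : cube n) : rpoly R n :=
  \prod_(i < n) (if a i then 'X_i else 1 - 'X_i).

Lemma peval_cube_indicator (a x : cube n) :
  peval (cube_indicator a) x = (a == x)%:R.
Proof.
have peval_factor i : meval (fun j => (x j : nat)%:R)
    (if a i then 'X_i else 1 - 'X_i : rpoly R n) = (a i == x i)%:R.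
  by case: (a i); rewrite ?mevalB ?meval1 mevalXU; case: (x i); rewrite /= ?subrr ?subr0.
rewrite /peval /cube_indicator rmorph_prod /=.
have [a_eq_x|a_ne_x] := eqVneq a x.
  by rewrite big1 // => i _; rewrite peval_factor a_eq_x eqxx.
have [j aj_ne_xj] : exists j, a j != x j.
  apply/existsP; rewrite -negb_forall; apply: contra a_ne_x => /forallP a_eq_x.
  by apply/eqP/ffunP => i; apply/eqP.
by rewrite (bigD1 j) //= peval_factor (negbTE aj_ne_xj) mul0r.
Qed.

Lemma exact_poly_exists f : exists p, forall x, peval p x = (f x)%:R.
Proof.
exists (\sum_(a | f a) cube_indicator a) => x.
rewrite /peval rmorph_sum /=.
under eq_bigr => a _ do rewrite [meval _ _]peval_cube_indicator.
case fx: (f x); last first.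
  by rewrite big1 // => a fa; case: eqVneq fa => // ->; rewrite fx.
by rewrite (bigD1 x) //= eqxx big1 ?addr0 // => a /andP[_ /negbTE ->].
Qed.

Lemma NepsP (eps : R) f : 0 <= eps ->
  exists p, deg_le p (Neps eps f) /\ approx_poly eps f p.
Proof.
move=> eps_ge0.
apply: (@minnatP (fun d => exists p, deg_le p d /\ approx_poly eps f p)).
have [p fp] := exact_poly_exists f; have [d dp] := deg_le_exists p.
exists d, p; split => // x; rewrite fp.
by case: (f x); rewrite ?normr0 ?normr1.
Qed.

Lemma sign_rep_shifted_square (eps : R) f q : 0 < eps -> eps < 1 ->
  approx_poly eps (fcompl f) q -> sign_rep f (q * q - ((1 + eps * eps) / 2)%:MP).
Proof.
move=> eps_gt0 eps_lt1 q_approx x; rewrite /peval mevalB mevalM mevalC.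
set v := meval _ q.
have := q_approx x; rewrite /fcompl; case: (f x) => /= [[small _]|[_ large]].
  by have := small erefl; rewrite ler_norml => /andP[? ?]; split => // _; nra.
have := large erefl; rewrite ler_normr => /orP v_large.
by split => // v_neg; exfalso; case: v_large => ?; nra.
Qed.

Lemma sign_deg_le_Meps (eps : R) f : 0 < eps -> eps < 1 ->
  (sign_deg R f <= 2 * Meps eps f)%N.
Proof.
move=> eps_gt0 eps_lt1.
have [q [dq q_approx]] := NepsP eps (fcompl f) (ltW eps_gt0).
apply: leq_trans (_ : Neps eps (fcompl f) + Neps eps (fcompl f) <= _)%N.
  apply: minnat_le; exists (q * q - ((1 + eps * eps) / 2)%:MP); split.
    exact/deg_leBC/deg_leM.
  exact: sign_rep_shifted_square.
by rewrite mul2n -addnn leq_add ?leq_maxr.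
Qed.

End Polynomials.

Section DecisionTrees.
Variable n : nat.
Implicit Types (f : boolfun n) (s : seq 'I_n) (x y : cube n).

Definition cube_set (x : cube n) (i : 'I_n) (b : bool) : cube n :=
  [ffun j => if j == i then b else x j].

Fixpoint query_all (f : boolfun n) (s : seq 'I_n) (x : cube n) : dtree n :=
  match s with
  | [::] => Leaf (f x)
  | i :: s' => Query i (query_all f s' (cube_set x i false))
                       (query_all f s' (cube_set x i true))
  end.

Lemma query_all_depth f s x : dt_depth (query_all f s x) = size s.
Proof. by elim: s x => [|i s IHs] x //=; rewrite !IHs maxnn. Qed.

Lemma query_all_eval f s x y : (forall j, j \notin s -> x j = y j) ->
  dt_eval (query_all f s x) y = f y.
Proof.
elim: s x => [|i s IHs] x xy /=.
  by congr f; apply/ffunP => j; apply: xy.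
case yi: (y i); apply: IHs => j j_notin_s; rewrite ffunE;
  case: eqP => [->//|/eqP j_ne_i]; apply: xy; by rewrite inE negb_or j_ne_i.
Qed.

Lemma Ddt_le_dim f : (Ddt f <= n)%N.
Proof.
apply: minnat_le; exists (query_all f (enum 'I_n) [ffun => false]); split.
  by rewrite query_all_depth size_enum_ord.
by move=> x; apply: query_all_eval => j; rewrite mem_enum.
Qed.

End DecisionTrees.

Lemma ge0_powR_le_invr {R : realType} {a x y : R} : 0 < a -> 0 <= x ->
  x `^ a <= y -> x <= y `^ a^-1.
Proof.
move=> a_gt0 x_ge0 xa_le_y.
have y_ge0 : 0 <= y by apply: le_trans xa_le_y; apply: powR_ge0.
rewrite -[x in x <= _](powRr1 x_ge0) -[1](mulfV (lt0r_neq0 a_gt0)) powRrM.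
by apply: ge0_ler_powR xa_le_y; rewrite ?nnegrE ?powR_ge0 // invr_ge0 ltW.
Qed.

Theorem lemma3p2 (R : realType) (c alpha : R) (hc : 0 < c) (halpha : 0 < alpha) :
  exists K : R,
    forall (eps : R), 0 < eps -> eps < 1 ->
    forall (C : forall n : nat, boolfun n -> Prop),
      (forall (n : nat) (f : boolfun n), C n f ->
         c * (n%:R `^ alpha) <= (sign_deg R f)%:R) ->
      forall (n : nat) (f : boolfun n), C n f ->
        (Ddt f)%:R <= K * ((Meps eps f)%:R `^ (alpha^-1)).
Proof.
exists ((2 / c) `^ alpha^-1) => eps eps_gt0 eps_lt1 C C_sign_deg n f Cf.
have c_sign_deg : c * n%:R `^ alpha <= 2 * (Meps eps f)%:R.
  apply: le_trans (C_sign_deg n f Cf) _; rewrite -natrM ler_nat.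
  exact: sign_deg_le_Meps.
have n_pow_le : n%:R `^ alpha <= 2 / c * (Meps eps f)%:R.
  by rewrite mulrAC ler_pdivlMr // mulrC.
apply: (le_trans (y := n%:R)); first by rewrite ler_nat Ddt_le_dim.
have two_div_c_ge0 : 0 <= 2 / c by rewrite divr_ge0 // ltW.
rewrite -powRM ?ler0n //.
exact: ge0_powR_le_invr halpha (ler0n R n) n_pow_le.
Qed.
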